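(* Let $\mathcal C$ be a complete and cocomplete category with two sets of maps $I$ and $J$ such that: (1) $(I\text{-cof},I\text{-fib})$ and $(J\text{-cof},J\text{-fib})$ are weak factorization systems and $J\subseteq I\text{-cof}$; (2) $\mathcal C$ is endowed with a left adjoint endofunctor $X\mapsto CX$ and natural transformations $e_0,e_1\colon \mathrm{Id}\Rightarrow C$; (3) for any $i\colon A\to B$ in $I$, the map $(B\sqcup B)\sqcup_{A\sqcup A}CA\to CB$ induced by $(e_0,e_1)$ and $C(i)$ is an $I$-cofibration; (4) for any $i\colon A\to B$ in $I$, the two maps $B\sqcup_A CA\to CB$ (for $\epsilon=0,1$, induced by $e_\epsilon$ and $C(i)$, the pushout being of $i$ and $e_{\epsilon,A}\colon A\to CA$) have the left lifting property against all $J$-fibrations between $J$-fibrant objects; (5) for any $j\colon A\to B$ in $J$, the map $(B\sqcup B)\sqcup_{A\sqcup A}CA\to CB$ has the left lifting property against all $J$-fibrations between $J$-fibrant objects. Then there is a weak model structure on $\mathcal C$ such that the fibrations between fibrant objects are the $J$-fibrations and the cofibrations between cofibrant objects are the $I$-cofibrations.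
   Context: All existence statements are understood constructively as chosen data. For a set of maps $I$, an $I$-fibration is a map with the right lifting property against every map of $I$, and an $I$-cofibration is a map with the left lifting property against every $I$-fibration; $X$ is $J$-fibrant if $X\to1$ is a $J$-fibration. $(I\text{-cof},I\text{-fib})$ is a weak factorization system when every map factors as an $I$-cofibration followed by an $I$-fibration. Weak model category: a category with a class of cofibrations (a class of maps containing isomorphisms with cofibrant domain, closed under composition, with a cofibrant initial object $0$, and such that pushouts of a cofibration $A\to B$ along $A\to C$ with $A,C$ cofibrant exist and $C\to C\sqcup_AB$ is a cofibration; $X$ cofibrant means $0\to X$ is a cofibration) and a class of fibrations (dual notion). Acyclic fibration: fibration with the right lifting property against all cofibrations between cofibrant objects; acyclic cofibration: cofibration with the left lifting property against all fibrations between fibrant objects. Axioms: every map from a cofibrant to a fibrant object factors as cofibration followed by acyclic fibration and as acyclic cofibration followed by fibration; every cofibration $A\to B$ from a cofibrant to a fibrant object has a relative strong cylinder object (a factorization $B\sqcup_AB\to I_AB\to B$ of the codiagonal, first map a cofibration, its restriction to the first copy of $B$ an acyclic cofibration); every fibration $Y\to X$ from a cofibrant to a fibrant object has a relative strong path object (dual factorization $Y\to P_XY\to Y\times_XY$ of the diagonal, second map a fibration, composite with first projection an acyclic fibration). *)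

(* Plain Rocq (no library needed): a small, honest development of the
   category-theoretic notions used in the statement.
   Composition is written in DIAGRAMMATIC order:  f >>> g  means "f, then g". *)

Set Implicit Arguments.

Record Category := {
  Obj :> Type;
  Hom : Obj -> Obj -> Type;
  cid : forall A, Hom A A;
  comp : forall A B C, Hom A B -> Hom B C -> Hom A C;
  comp_id_l : forall A B (f : Hom A B), comp (cid A) f = f;
  comp_id_r : forall A B (f : Hom A B), comp f (cid B) = f;
  comp_assoc : forall A B C D (f : Hom A B) (g : Hom B C) (h : Hom C D),
      comp (comp f g) h = comp f (comp g h)
}.
Arguments Hom {_} _ _.
Arguments cid {_} _.
Arguments comp {_ _ _ _} _ _.
Notation "f >>> g" := (comp f g) (at level 40, left associativity).

Definition MapClass (C : Category) := forall A B : C, Hom A B -> Prop.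

(** * Small categories and (small) diagrams: "small" = living in [Set] *)
Record SmallCategory := {
  sObj :> Set;
  sHom : sObj -> sObj -> Set;
  sid : forall a, sHom a a;
  scomp : forall a b c, sHom a b -> sHom b c -> sHom a c;
  scomp_id_l : forall a b (f : sHom a b), scomp (sid a) f = f;
  scomp_id_r : forall a b (f : sHom a b), scomp f (sid b) = f;
  scomp_assoc : forall a b c d (f : sHom a b) (g : sHom b c) (h : sHom c d),
      scomp (scomp f g) h = scomp f (scomp g h)
}.
Arguments sHom {_} _ _.
Arguments sid {_} _.
Arguments scomp {_ _ _ _} _ _.

Record Diagram (J : SmallCategory) (C : Category) := {
  dob : J -> C;
  dmap : forall a b : J, sHom a b -> Hom (dob a) (dob b);
  dmap_id : forall a, dmap a a (sid a) = cid (dob a);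
  dmap_comp : forall a b c (f : sHom a b) (g : sHom b c),
      dmap a c (scomp f g) = dmap a b f >>> dmap b c g
}.
Arguments dob {_ _} _ _.
Arguments dmap {_ _} _ {_ _} _.

Definition is_limit (J : SmallCategory) (C : Category) (D : Diagram J C)
  (L : C) (pi : forall a, Hom L (dob D a)) : Prop :=
  (forall a b (u : sHom a b), pi a >>> dmap D u = pi b) /\
  (forall (X : C) (x : forall a, Hom X (dob D a)),
      (forall a b (u : sHom a b), x a >>> dmap D u = x b) ->
      exists h : Hom X L, (forall a, h >>> pi a = x a) /\
        forall h' : Hom X L, (forall a, h' >>> pi a = x a) -> h' = h).

Definition is_colimit (J : SmallCategory) (C : Category) (D : Diagram J C)
  (L : C) (iota : forall a, Hom (dob D a) L) : Prop :=
  (forall a b (u : sHom a b), dmap D u >>> iota b = iota a) /\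
  (forall (X : C) (x : forall a, Hom (dob D a) X),
      (forall a b (u : sHom a b), dmap D u >>> x b = x a) ->
      exists h : Hom L X, (forall a, iota a >>> h = x a) /\
        forall h' : Hom L X, (forall a, iota a >>> h' = x a) -> h' = h).

Definition complete (C : Category) : Prop :=
  forall (J : SmallCategory) (D : Diagram J C),
    exists (L : C) (pi : forall a, Hom L (dob D a)), is_limit D L pi.

Definition cocomplete (C : Category) : Prop :=
  forall (J : SmallCategory) (D : Diagram J C),
    exists (L : C) (iota : forall a, Hom (dob D a) L), is_colimit D L iota.

Section Special.
Variable C : Category.

Definition is_initial (O : C) : Prop :=
  forall X : C, exists f : Hom O X, forall g : Hom O X, g = f.

Definition is_terminal (T : C) : Prop :=
  forall X : C, exists f : Hom X T, forall g : Hom X T, g = f.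

Definition is_iso (A B : C) (f : Hom A B) : Prop :=
  exists g : Hom B A, f >>> g = cid A /\ g >>> f = cid B.
Arguments is_iso {A B} f.

Definition is_coproduct (X Y S : C) (in1 : Hom X S) (in2 : Hom Y S) : Prop :=
  forall (Z : C) (f : Hom X Z) (g : Hom Y Z),
    exists h : Hom S Z, (in1 >>> h = f /\ in2 >>> h = g) /\
      forall h' : Hom S Z, in1 >>> h' = f -> in2 >>> h' = g -> h' = h.
Arguments is_coproduct {X Y S} in1 in2.

Definition is_pushout (A B D : C) (f : Hom A B) (g : Hom A D)
  (P : C) (p1 : Hom B P) (p2 : Hom D P) : Prop :=
  f >>> p1 = g >>> p2 /\
  forall (Z : C) (u : Hom B Z) (v : Hom D Z), f >>> u = g >>> v ->
    exists h : Hom P Z, (p1 >>> h = u /\ p2 >>> h = v) /\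
      forall h' : Hom P Z, p1 >>> h' = u -> p2 >>> h' = v -> h' = h.
Arguments is_pushout {A B D} f g {P} p1 p2.

Definition is_pullback (X Y Z : C) (f : Hom Y X) (g : Hom Z X)
  (Q : C) (q1 : Hom Q Y) (q2 : Hom Q Z) : Prop :=
  q1 >>> f = q2 >>> g /\
  forall (W : C) (u : Hom W Y) (v : Hom W Z), u >>> f = v >>> g ->
    exists h : Hom W Q, (h >>> q1 = u /\ h >>> q2 = v) /\
      forall h' : Hom W Q, h' >>> q1 = u -> h' >>> q2 = v -> h' = h.
Arguments is_pullback {X Y Z} f g {Q} q1 q2.

Definition llp (A B X Y : C) (i : Hom A B) (p : Hom X Y) : Prop :=
  forall (u : Hom A X) (v : Hom B Y), u >>> p = i >>> v ->
    exists h : Hom B X, i >>> h = u /\ h >>> p = v.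
Arguments llp {A B X Y} i p.

Definition rlp_class (I : MapClass C) : MapClass C :=
  fun X Y p => forall A B (i : Hom A B), I A B i -> llp i p.

Definition llp_class (I : MapClass C) : MapClass C :=
  fun A B i => forall X Y (p : Hom X Y), rlp_class I X Y p -> llp i p.

Definition fib_of (I : MapClass C) := rlp_class I.
Definition cof_of (I : MapClass C) := llp_class I.

(** [X] is P-fibrant: its (unique) map to a terminal object is in P
    (stated for every terminal object, they all being uniquely isomorphic). *)
Definition fibrant_wrt (P : MapClass C) (X : C) : Prop :=
  forall (T : C), is_terminal T -> forall t : Hom X T, P X T t.

Definition cofibrant_wrt (P : MapClass C) (X : C) : Prop :=
  forall (O : C), is_initial O -> forall o : Hom O X, P O X o.

Definition wfs (I : MapClass C) : Prop :=
  forall A B (f : Hom A B), exists (M : C) (g : Hom A M) (h : Hom M B),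
    g >>> h = f /\ cof_of I A M g /\ fib_of I M B h.

Section WMS.
Variables Cof Fib : MapClass C.

Definition cofibrant (X : C) := cofibrant_wrt Cof X.
Definition fibrant (X : C) := fibrant_wrt Fib X.

Definition acyclic_fib (X Y : C) (p : Hom X Y) : Prop :=
  Fib X Y p /\ forall A B (i : Hom A B), Cof A B i -> cofibrant A -> cofibrant B -> llp i p.
Arguments acyclic_fib {X Y} p.

Definition acyclic_cof (A B : C) (i : Hom A B) : Prop :=
  Cof A B i /\ forall X Y (p : Hom X Y), Fib X Y p -> fibrant X -> fibrant Y -> llp i p.
Arguments acyclic_cof {A B} i.

Definition cofibration_class_axioms : Prop :=
  (forall A B (f : Hom A B), is_iso f -> cofibrant A -> Cof A B f) /\
  (forall A B D (f : Hom A B) (g : Hom B D), Cof A B f -> Cof B D g -> Cof A D (f >>> g)) /\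
  (exists O : C, is_initial O) /\
  (forall O : C, is_initial O -> cofibrant O) /\
  (forall A B D (i : Hom A B) (f : Hom A D), Cof A B i -> cofibrant A -> cofibrant D ->
     (exists (P : C) (p1 : Hom B P) (p2 : Hom D P), is_pushout i f p1 p2) /\
     (forall (P : C) (p1 : Hom B P) (p2 : Hom D P), is_pushout i f p1 p2 -> Cof D P p2)).

Definition fibration_class_axioms : Prop :=
  (forall A B (f : Hom A B), is_iso f -> fibrant B -> Fib A B f) /\
  (forall A B D (f : Hom A B) (g : Hom B D), Fib A B f -> Fib B D g -> Fib A D (f >>> g)) /\
  (exists T : C, is_terminal T) /\
  (forall T : C, is_terminal T -> fibrant T) /\
  (forall X Y Z (p : Hom Y X) (f : Hom Z X), Fib Y X p -> fibrant X -> fibrant Z ->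
     (exists (Q : C) (q1 : Hom Q Y) (q2 : Hom Q Z), is_pullback p f q1 q2) /\
     (forall (Q : C) (q1 : Hom Q Y) (q2 : Hom Q Z), is_pullback p f q1 q2 -> Fib Q Z q2)).

Definition is_weak_model_structure : Prop :=
  cofibration_class_axioms /\ fibration_class_axioms /\
  (forall A X (f : Hom A X), cofibrant A -> fibrant X ->
     (exists (M : C) (i : Hom A M) (p : Hom M X),
         i >>> p = f /\ Cof A M i /\ acyclic_fib p) /\
     (exists (M : C) (i : Hom A M) (p : Hom M X),
         i >>> p = f /\ acyclic_cof i /\ Fib M X p)) /\
  (forall A B (i : Hom A B), Cof A B i -> cofibrant A -> fibrant B ->
     forall (P : C) (in1 in2 : Hom B P), is_pushout i i in1 in2 ->
     exists (Cyl : C) (c : Hom P Cyl) (q : Hom Cyl B),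
       in1 >>> (c >>> q) = cid B /\ in2 >>> (c >>> q) = cid B /\
       Cof P Cyl c /\ acyclic_cof (in1 >>> c)) /\
  (forall X Y (p : Hom Y X), Fib Y X p -> cofibrant Y -> fibrant X ->
     forall (Q : C) (pr1 pr2 : Hom Q Y), is_pullback p p pr1 pr2 ->
     exists (Pth : C) (s : Hom Y Pth) (q : Hom Pth Q),
       (s >>> q) >>> pr1 = cid Y /\ (s >>> q) >>> pr2 = cid Y /\
       Fib Pth Q q /\ acyclic_fib (q >>> pr1)).

End WMS.

End Special.
Arguments is_initial {C} O.
Arguments is_terminal {C} T.
Arguments llp {C A B X Y} i p.
Arguments is_iso {C A B} f.
Arguments is_coproduct {C X Y S} in1 in2.
Arguments is_pushout {C A B D} f g {P} p1 p2.
Arguments is_pullback {C X Y Z} f g {Q} q1 q2.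
Arguments rlp_class {C} I _ _ _.
Arguments llp_class {C} I _ _ _.
Arguments fib_of {C} I _ _ _.
Arguments cof_of {C} I _ _ _.
Arguments fibrant_wrt {C} P X.
Arguments cofibrant_wrt {C} P X.
Arguments wfs {C} I.
Arguments cofibrant {C} Cof X.
Arguments fibrant {C} Fib X.
Arguments acyclic_fib {C} Cof Fib {X Y} p.
Arguments acyclic_cof {C} Cof Fib {A B} i.
Arguments is_weak_model_structure {C} Cof Fib.

Record Endofunctor (C : Category) := {
  fobj :> C -> C;
  fmap : forall A B : C, Hom A B -> Hom (fobj A) (fobj B);
  fmap_id : forall A, fmap A A (cid A) = cid (fobj A);
  fmap_comp : forall A B D (f : Hom A B) (g : Hom B D),
      fmap A D (f >>> g) = fmap A B f >>> fmap B D g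
}.
Arguments fmap {_} _ {_ _} _.

Definition nat_from_id (C : Category) (F : Endofunctor C)
  (e : forall X : C, Hom X (F X)) : Prop :=
  forall X Y (f : Hom X Y), f >>> e Y = e X >>> fmap F f.

Definition is_left_adjoint (C : Category) (F : Endofunctor C) : Prop :=
  exists (G : Endofunctor C) (eta : forall X : C, Hom X (G (F X)))
         (eps : forall Y : C, Hom (F (G Y)) Y),
    (forall X X' (f : Hom X X'), f >>> eta X' = eta X >>> fmap G (fmap F f)) /\
    (forall Y Y' (g : Hom Y Y'), fmap F (fmap G g) >>> eps Y' = eps Y >>> g) /\
    (forall X, fmap F (eta X) >>> eps (F X) = cid (F X)) /\
    (forall Y, eta (G Y) >>> fmap G (eps Y) = cid (G Y)).

(** The map (B ⊔ B) ⊔_{A ⊔ A} CA -> CB induced by (e0,e1) and C(i), for i : A -> B: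
    for any choice of coproducts, pushout, and of the induced maps (all determined
    by their universal properties), the induced map [m] has property [Prop_]. *)
Definition boundary_map_has (C : Category) (F : Endofunctor C)
  (e0 e1 : forall X : C, Hom X (F X)) (A B : C) (i : Hom A B)
  (Prop_ : forall X Y : C, Hom X Y -> Prop) : Prop :=
  forall (SA : C) (a1 a2 : Hom A SA), is_coproduct a1 a2 ->
  forall (SB : C) (b1 b2 : Hom B SB), is_coproduct b1 b2 ->
  forall (u : Hom SA SB), a1 >>> u = i >>> b1 -> a2 >>> u = i >>> b2 ->
  forall (v : Hom SA (F A)), a1 >>> v = e0 A -> a2 >>> v = e1 A ->
  forall (P : C) (p1 : Hom SB P) (p2 : Hom (F A) P), is_pushout u v p1 p2 ->
  forall (m : Hom P (F B)),
    b1 >>> (p1 >>> m) = e0 B -> b2 >>> (p1 >>> m) = e1 B -> p2 >>> m = fmap F i ->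
    Prop_ P (F B) m.

Definition end_map_has (C : Category) (F : Endofunctor C)
  (e : forall X : C, Hom X (F X)) (A B : C) (i : Hom A B)
  (Prop_ : forall X Y : C, Hom X Y -> Prop) : Prop :=
  forall (P : C) (p1 : Hom B P) (p2 : Hom (F A) P), is_pushout i (e A) p1 p2 ->
  forall (m : Hom P (F B)), p1 >>> m = e B -> p2 >>> m = fmap F i ->
    Prop_ P (F B) m.

Definition llp_Jfib_fibrant (C : Category) (J : MapClass C) : MapClass C :=
  fun A B i => forall X Y (p : Hom X Y), fib_of J X Y p ->
    fibrant_wrt (fib_of J) X -> fibrant_wrt (fib_of J) Y -> llp i p.
Arguments boundary_map_has {C} F e0 e1 {A B} i Prop_.
Arguments end_map_has {C} F e {A B} i Prop_.
Arguments llp_Jfib_fibrant {C} J _ _ _.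

(* Cofibrations are the I-cofibrations and fibrations the J-fibrations. The right
   adjoint [G] of the cylinder functor is a path object functor, with end evaluations
   [ev e0], [ev e1] : G X -> X. By adjunction, conditions (3)-(5) say that generators
   lift against the gap maps of [G] (G X -> G Y ×_(Y×Y) (X×X), and G X -> G Y ×_Y X
   at one end); these gap maps are then I- resp. J-fibrations, so all I- resp.
   J-cofibrations lift against them. Everything in the weak model structure is then
   formal except the acyclicity of the cylinder inclusion and of the path object
   projection. For an I-cofibration j : B -> Z with an I-fibration retraction r and B
   bifibrant, lifting j against the boundary gap map of r gives a homotopy, relative
   to B, from the identity of Z to a map through j; a lifting problem of j against a
   J-fibration between fibrant objects is solved by lifting along this homotopy at the
   end e1 and evaluating at e0. The path object is handled dually with (5). *)


Set Implicit Arguments.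

Lemma comp_rw2 {C : Category} {A B D E : C} {f : Hom A B} {g : Hom B D} {h : Hom A D}
  (k : Hom D E) :
  f >>> g = h -> f >>> (g >>> k) = h >>> k.
Proof. intros H; rewrite <- comp_assoc, H; reflexivity. Qed.

Lemma comp_rw3 {C : Category} {A B D E F : C} {f : Hom A B} {g : Hom B D} {g' : Hom D E}
  {h : Hom A E} (k : Hom E F) :
  f >>> (g >>> g') = h -> f >>> (g >>> (g' >>> k)) = h >>> k.
Proof. intros H; rewrite <- (comp_assoc _ _ _ _ _ g g' k), <- comp_assoc, H; reflexivity. Qed.

Lemma comp_rw4 {C : Category} {A B D E F G : C} {f : Hom A B} {g : Hom B D} {g' : Hom D E}
  {g'' : Hom E F} {h : Hom A F} (k : Hom F G) :
  f >>> (g >>> (g' >>> g'')) = h -> f >>> (g >>> (g' >>> (g'' >>> k))) = h >>> k.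
Proof. intros H; rewrite <- (comp_assoc _ _ _ _ _ g' g'' k); apply comp_rw3, H. Qed.

Ltac reassoc := repeat rewrite comp_assoc.

(* [rwa H] rewrites with an equation [H] whose left side is a composite of up to
   four maps, wherever it occurs inside a right-associated composite. *)
Ltac rwa H := reassoc;
  first [ rewrite (comp_rw4 _ H) | rewrite (comp_rw3 _ H) | rewrite (comp_rw2 _ H)
        | rewrite H ];
  reassoc.

Section Lifting.
Variable C : Category.
Implicit Types A B D O P Q S T W X Y Z : C.

Lemma initial_hom_eq {O X : C} (HO : is_initial O) (f g : Hom O X) : f = g.
Proof. destruct (HO X) as [w Hw]. rewrite (Hw f), (Hw g). reflexivity. Qed.

Lemma terminal_hom_eq {T X : C} (HT : is_terminal T) (f g : Hom X T) : f = g.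
Proof. destruct (HT X) as [w Hw]. rewrite (Hw f), (Hw g). reflexivity. Qed.

Lemma initial_hom_iso {O O' : C} (o : Hom O O') : is_initial O -> is_initial O' -> is_iso o.
Proof.
  intros HO HO'. destruct (HO' O) as [o' _].
  exists o'. split; apply initial_hom_eq; assumption.
Qed.

Lemma terminal_hom_iso {T T' : C} (t : Hom T T') : is_terminal T -> is_terminal T' -> is_iso t.
Proof.
  intros HT HT'. destruct (HT T') as [t' _].
  exists t'. split; apply terminal_hom_eq; assumption.
Qed.

Lemma iso_llp {A B X Y : C} (f : Hom A B) (p : Hom X Y) : is_iso f -> llp f p.
Proof.
  intros [g [fg gf]] u v Hsq. exists (g >>> u). split.
  - rewrite <- comp_assoc, fg, comp_id_l. reflexivity.
  - rewrite comp_assoc, Hsq, <- comp_assoc, gf, comp_id_l. reflexivity.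
Qed.

Lemma iso_rlp {A B X Y : C} (i : Hom A B) (f : Hom X Y) : is_iso f -> llp i f.
Proof.
  intros [g [fg gf]] u v Hsq. exists (v >>> g). split.
  - rewrite <- comp_assoc, <- Hsq, comp_assoc, fg, comp_id_r. reflexivity.
  - rewrite comp_assoc, gf, comp_id_r. reflexivity.
Qed.

Lemma llp_comp_l {A B D X Y : C} (f : Hom A B) (g : Hom B D) (p : Hom X Y) :
  llp f p -> llp g p -> llp (f >>> g) p.
Proof.
  intros Hf Hg u v Hsq.
  destruct (Hf u (g >>> v)) as [k [k1 k2]]. { rewrite Hsq, comp_assoc. reflexivity. }
  destruct (Hg k v k2) as [h [h1 h2]].
  exists h. split; [rewrite comp_assoc, h1|]; assumption.
Qed.

Lemma llp_comp_r {A B X Y Z : C} (i : Hom A B) (f : Hom X Y) (g : Hom Y Z) :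
  llp i f -> llp i g -> llp i (f >>> g).
Proof.
  intros Hf Hg u v Hsq.
  destruct (Hg (u >>> f) v) as [k [k1 k2]]. { rewrite comp_assoc, Hsq. reflexivity. }
  destruct (Hf u k (eq_sym k1)) as [h [h1 h2]].
  exists h. split; [|rewrite <- comp_assoc, h2]; assumption.
Qed.

Lemma pushout_ext {A B D : C} (f : Hom A B) (g : Hom A D) P (p1 : Hom B P) (p2 : Hom D P)
  (HP : is_pushout f g p1 p2) Z (h h' : Hom P Z) :
  p1 >>> h = p1 >>> h' -> p2 >>> h = p2 >>> h' -> h = h'.
Proof.
  intros E1 E2. destruct HP as [Hc Hu].
  destruct (Hu Z (p1 >>> h) (p2 >>> h)) as [k [_ Hk]].
  { rewrite <- !comp_assoc, Hc. reflexivity. }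
  rewrite (Hk h eq_refl eq_refl), (Hk h' (eq_sym E1) (eq_sym E2)). reflexivity.
Qed.

Lemma pullback_ext {X Y Z : C} (f : Hom Y X) (g : Hom Z X) Q (q1 : Hom Q Y) (q2 : Hom Q Z)
  (HQ : is_pullback f g q1 q2) W (h h' : Hom W Q) :
  h >>> q1 = h' >>> q1 -> h >>> q2 = h' >>> q2 -> h = h'.
Proof.
  intros E1 E2. destruct HQ as [Hc Hu].
  destruct (Hu W (h >>> q1) (h >>> q2)) as [k [_ Hk]].
  { rewrite !comp_assoc, Hc. reflexivity. }
  rewrite (Hk h eq_refl eq_refl), (Hk h' (eq_sym E1) (eq_sym E2)). reflexivity.
Qed.

Lemma coproduct_ext {X Y S : C} (i1 : Hom X S) (i2 : Hom Y S) (HS : is_coproduct i1 i2)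
  Z (h h' : Hom S Z) :
  i1 >>> h = i1 >>> h' -> i2 >>> h = i2 >>> h' -> h = h'.
Proof.
  intros E1 E2. destruct (HS Z (i1 >>> h) (i2 >>> h)) as [k [_ Hk]].
  rewrite (Hk h eq_refl eq_refl), (Hk h' (eq_sym E1) (eq_sym E2)). reflexivity.
Qed.

Lemma pushout_sym {A B D : C} (f : Hom A B) (g : Hom A D) P (p1 : Hom B P) (p2 : Hom D P) :
  is_pushout f g p1 p2 -> is_pushout g f p2 p1.
Proof.
  intros [Hc Hu]. split; [symmetry; exact Hc|].
  intros Z u v E. destruct (Hu Z v u (eq_sym E)) as [h [[h1 h2] hu]].
  exists h. split; [split; assumption|]. intros h' e1 e2. apply hu; assumption.
Qed.

Lemma pullback_sym {X Y Z : C} (f : Hom Y X) (g : Hom Z X) Q (q1 : Hom Q Y) (q2 : Hom Q Z) :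
  is_pullback f g q1 q2 -> is_pullback g f q2 q1.
Proof.
  intros [Hc Hu]. split; [symmetry; exact Hc|].
  intros W u v E. destruct (Hu W v u (eq_sym E)) as [h [[h1 h2] hu]].
  exists h. split; [split; assumption|]. intros h' e1 e2. apply hu; assumption.
Qed.

Lemma llp_pushout {A B D X Y : C} (f : Hom A B) (g : Hom A D) P (p1 : Hom B P) (p2 : Hom D P)
  (p : Hom X Y) :
  is_pushout f g p1 p2 -> llp f p -> llp p2 p.
Proof.
  intros HP Hf u v Hsq.
  destruct (Hf (g >>> u) (p1 >>> v)) as [k [k1 k2]].
  { rewrite comp_assoc, Hsq, <- !comp_assoc, (proj1 HP). reflexivity. }
  destruct (proj2 HP X k u k1) as [h [[h1 h2] _]].
  exists h. split; [assumption|].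
  apply (pushout_ext HP); rewrite <- comp_assoc; [rewrite h1 | rewrite h2]; assumption.
Qed.

Lemma llp_pullback {A B X Y Z : C} (i : Hom A B) (f : Hom Y X) (g : Hom Z X)
  Q (q1 : Hom Q Y) (q2 : Hom Q Z) :
  is_pullback f g q1 q2 -> llp i f -> llp i q2.
Proof.
  intros HQ Hf u v Hsq.
  destruct (Hf (u >>> q1) (v >>> g)) as [k [k1 k2]].
  { rewrite comp_assoc, (proj1 HQ), <- !comp_assoc, Hsq. reflexivity. }
  destruct (proj2 HQ B k v k2) as [h [[h1 h2] _]].
  exists h. split; [|assumption].
  apply (pullback_ext HQ); rewrite comp_assoc; [rewrite h1 | rewrite h2]; [exact k1|].
  symmetry; exact Hsq.
Qed.

Variable K : MapClass C.

Lemma cof_of_comp {A B D : C} (f : Hom A B) (g : Hom B D) :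
  cof_of K A B f -> cof_of K B D g -> cof_of K A D (f >>> g).
Proof. intros Hf Hg X Y p Hp. exact (llp_comp_l (Hf X Y p Hp) (Hg X Y p Hp)). Qed.

Lemma fib_of_comp {X Y Z : C} (f : Hom X Y) (g : Hom Y Z) :
  fib_of K X Y f -> fib_of K Y Z g -> fib_of K X Z (f >>> g).
Proof. intros Hf Hg A B i Hi. exact (llp_comp_r (Hf A B i Hi) (Hg A B i Hi)). Qed.

Lemma cof_of_pushout {A B D : C} (f : Hom A B) (g : Hom A D) P (p1 : Hom B P) (p2 : Hom D P) :
  is_pushout f g p1 p2 -> cof_of K A B f -> cof_of K D P p2.
Proof. intros HP Hf X Y p Hp. exact (llp_pushout HP (Hf X Y p Hp)). Qed.

Lemma fib_of_pullback {X Y Z : C} (f : Hom Y X) (g : Hom Z X) Q (q1 : Hom Q Y) (q2 : Hom Q Z) :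
  is_pullback f g q1 q2 -> fib_of K Y X f -> fib_of K Q Z q2.
Proof. intros HQ Hf A B i Hi. exact (llp_pullback HQ (Hf A B i Hi)). Qed.

Lemma cofibrant_of_cof {A B : C} (i : Hom A B) :
  cof_of K A B i -> cofibrant_wrt (cof_of K) A -> cofibrant_wrt (cof_of K) B.
Proof.
  intros Hi HA O HO o. destruct (HO A) as [oa _].
  rewrite (initial_hom_eq HO o (oa >>> i)). exact (cof_of_comp (HA O HO oa) Hi).
Qed.

Lemma fibrant_of_fib {X Y : C} (p : Hom X Y) :
  fib_of K X Y p -> fibrant_wrt (fib_of K) Y -> fibrant_wrt (fib_of K) X.
Proof.
  intros Hp HY T HT t. destruct (HT Y) as [w _].
  rewrite (terminal_hom_eq HT t (p >>> w)). exact (fib_of_comp Hp (HY T HT w)).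
Qed.

Lemma fibrant_terminal {T : C} : is_terminal T -> fibrant_wrt (fib_of K) T.
Proof. intros HT T' HT' t A B i _. exact (iso_rlp i (terminal_hom_iso t HT HT')). Qed.

End Lifting.

(* Finite shapes are presented as preorders on a finite [Set]: the hom-set from [a]
   to [b] is [unit] or empty according to the boolean relation. *)
Definition bool_set (b : bool) : Set := if b then unit else Empty_set.

Lemma bool_set_true {b : bool} : bool_set b -> b = true.
Proof. destruct b; [reflexivity | intros []]. Qed.

Definition bool_set_of (b : bool) (H : b = true) : bool_set b :=
  match eq_sym H in _ = b' return bool_set b' with eq_refl => tt end.

Lemma bool_set_eq (b : bool) (x y : bool_set b) : x = y.
Proof. destruct b; [destruct x, y; reflexivity | destruct x]. Qed.

Section PreorderCategory.
Variables (T : Set) (R : T -> T -> bool).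
Hypothesis R_refl : forall a, R a a = true.
Hypothesis R_trans : forall a b c, R a b = true -> R b c = true -> R a c = true.

Definition preorder_cat : SmallCategory.
Proof.
  refine (@Build_SmallCategory T (fun a b => bool_set (R a b))
            (fun a => bool_set_of (R_refl a))
            (fun a b c f g => bool_set_of (R_trans (bool_set_true f) (bool_set_true g)))
            _ _ _);
  intros; apply bool_set_eq.
Defined.
End PreorderCategory.

Definition empty_rel (x y : Empty_set) : bool := match x with end.

Definition empty_cat : SmallCategory :=
  preorder_cat empty_rel (fun a => match a with end) (fun a => match a with end).

Inductive span_vertex : Set := span_left | span_right | span_apex.

Definition span_rel (x y : span_vertex) : bool :=
  match x, y with
  | span_apex, _ | span_left, span_left | span_right, span_right => true
  | _, _ => false
  end.

Definition cospan_rel (x y : span_vertex) : bool := span_rel y x.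

Definition span_cat : SmallCategory.
Proof.
  refine (@preorder_cat _ span_rel _ _).
  - intros []; reflexivity.
  - intros [] [] []; simpl; congruence.
Defined.

Definition cospan_cat : SmallCategory.
Proof.
  refine (@preorder_cat _ cospan_rel _ _).
  - intros []; reflexivity.
  - intros [] [] []; simpl; congruence.
Defined.

Section FiniteLimits.
Variable C : Category.

Definition empty_diag : Diagram empty_cat C.
Proof.
  refine (@Build_Diagram empty_cat C (fun a => match a with end)
            (fun a => match a with end) _ _);
  intros [].
Defined.

Lemma initial_exists : cocomplete C -> exists O : C, is_initial O.
Proof.
  intros Hcc. destruct (Hcc _ empty_diag) as [O [io [_ Hu]]].
  exists O. intros X.
  destruct (Hu X (fun a => match a with end) (fun a => match a with end)) as [h [_ Hh]].
  exists h. intros g. apply Hh. intros [].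
Qed.

Lemma terminal_exists : complete C -> exists T : C, is_terminal T.
Proof.
  intros Hc. destruct (Hc _ empty_diag) as [T [pi [_ Hu]]].
  exists T. intros X.
  destruct (Hu X (fun a => match a with end) (fun a => match a with end)) as [h [_ Hh]].
  exists h. intros g. apply Hh. intros [].
Qed.

Section Span.
Context {A B D : C} (f : Hom A B) (g : Hom A D).

Definition span_ob (x : span_vertex) : C :=
  match x with span_left => B | span_right => D | span_apex => A end.

Definition span_map (x y : span_cat) : sHom x y -> Hom (span_ob x) (span_ob y) :=
  match x, y return sHom (s := span_cat) x y -> Hom (span_ob x) (span_ob y) with
  | span_left, span_left | span_right, span_right | span_apex, span_apex => fun _ => cid _
  | span_apex, span_left => fun _ => f
  | span_apex, span_right => fun _ => g
  | span_left, _ | span_right, _ => fun e => match e with end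
  end.

Definition span_diag : Diagram span_cat C.
Proof.
  refine (@Build_Diagram span_cat C span_ob span_map _ _).
  - intros []; reflexivity.
  - intros [] [] [] u v; try destruct u; try destruct v; simpl;
      rewrite ?comp_id_l, ?comp_id_r; reflexivity.
Defined.

Lemma pushout_exists :
  cocomplete C -> exists P (p1 : Hom B P) (p2 : Hom D P), is_pushout f g p1 p2.
Proof.
  intros Hcc. destruct (Hcc _ span_diag) as [P [io [Hc Hu]]].
  pose proof (Hc span_apex span_left tt) as E1. pose proof (Hc span_apex span_right tt) as E2.
  simpl in E1, E2.
  exists P, (io span_left), (io span_right).
  split; [rewrite E1, E2; reflexivity|].
  intros Z u v E.
  destruct (Hu Z (fun a => match a return Hom (span_ob a) Z with
                           | span_left => u | span_right => v | span_apex => f >>> u end))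
    as [h [Hh Huniq]].
  { intros [] [] w; try destruct w; simpl; rewrite ?comp_id_l; auto. }
  exists h. split; [split; [exact (Hh span_left) | exact (Hh span_right)]|].
  intros h' e1 e2. apply Huniq. intros []; simpl; auto.
  rewrite <- E1, comp_assoc, e1. reflexivity.
Qed.
End Span.

Section Cospan.
Context {X Y Z : C} (f : Hom Y X) (g : Hom Z X).

Definition cospan_ob (x : span_vertex) : C :=
  match x with span_left => Y | span_right => Z | span_apex => X end.

Definition cospan_map (x y : cospan_cat) : sHom x y -> Hom (cospan_ob x) (cospan_ob y) :=
  match x, y return sHom (s := cospan_cat) x y -> Hom (cospan_ob x) (cospan_ob y) with
  | span_left, span_left | span_right, span_right | span_apex, span_apex => fun _ => cid _
  | span_left, span_apex => fun _ => f
  | span_right, span_apex => fun _ => g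
  | _, span_left | _, span_right => fun e => match e with end
  end.

Definition cospan_diag : Diagram cospan_cat C.
Proof.
  refine (@Build_Diagram cospan_cat C cospan_ob cospan_map _ _).
  - intros []; reflexivity.
  - intros [] [] [] u v; try destruct u; try destruct v; simpl;
      rewrite ?comp_id_l, ?comp_id_r; reflexivity.
Defined.

Lemma pullback_exists :
  complete C -> exists Q (q1 : Hom Q Y) (q2 : Hom Q Z), is_pullback f g q1 q2.
Proof.
  intros Hc. destruct (Hc _ cospan_diag) as [Q [pi [Hcone Hu]]].
  pose proof (Hcone span_left span_apex tt) as E1.
  pose proof (Hcone span_right span_apex tt) as E2.
  simpl in E1, E2.
  exists Q, (pi span_left), (pi span_right).
  split; [rewrite E1, E2; reflexivity|].
  intros W u v E.
  destruct (Hu W (fun a => match a return Hom W (cospan_ob a) with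
                           | span_left => u | span_right => v | span_apex => u >>> f end))
    as [h [Hh Huniq]].
  { intros [] [] w; try destruct w; simpl; rewrite ?comp_id_r; auto. }
  exists h. split; [split; [exact (Hh span_left) | exact (Hh span_right)]|].
  intros h' e1 e2. apply Huniq. intros []; simpl; auto.
  rewrite <- E1, <- comp_assoc, e1. reflexivity.
Qed.
End Cospan.

Lemma coproduct_exists (X Y : C) :
  cocomplete C -> exists S (i1 : Hom X S) (i2 : Hom Y S), is_coproduct i1 i2.
Proof.
  intros Hcc. destruct (initial_exists Hcc) as [O HO].
  destruct (HO X) as [ox _]. destruct (HO Y) as [oy _].
  destruct (pushout_exists ox oy Hcc) as [S [i1 [i2 [_ HS]]]].
  exists S, i1, i2. intros Z u v.
  exact (HS Z u v (initial_hom_eq HO _ _)).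
Qed.

Lemma cof_of_class_axioms (K : MapClass C) :
  cocomplete C -> cofibration_class_axioms (cof_of K).
Proof.
  intros Hcc. split; [|split; [|split; [|split]]].
  - intros A B f Hf _ X Y p _. exact (iso_llp p Hf).
  - intros A B D f g. apply cof_of_comp.
  - exact (initial_exists Hcc).
  - intros O HO O' HO' o X Y p _. exact (iso_llp p (initial_hom_iso o HO' HO)).
  - intros A B D i f Hi _ _. split; [exact (pushout_exists i f Hcc)|].
    intros P p1 p2 HP. exact (cof_of_pushout HP Hi).
Qed.

Lemma fib_of_class_axioms (K : MapClass C) :
  complete C -> fibration_class_axioms (fib_of K).
Proof.
  intros Hc. split; [|split; [|split; [|split]]].
  - intros A B f Hf _ X Y i _. exact (iso_rlp i Hf).
  - intros A B D f g. apply fib_of_comp.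
  - exact (terminal_exists Hc).
  - intros T HT. apply fibrant_terminal, HT.
  - intros X Y Z p f Hp _ _. split; [exact (pullback_exists p f Hc)|].
    intros Q q1 q2 HQ. exact (fib_of_pullback HQ Hp).
Qed.

End FiniteLimits.

Section GeneratedClasses.
Variables (C : Category) (I J : MapClass C).
Hypothesis HJI : forall A B (j : Hom A B), J A B j -> cof_of I A B j.

Lemma fib_of_I_J {X Y : C} (p : Hom X Y) : fib_of I X Y p -> fib_of J X Y p.
Proof. intros Hp A B j Hj. exact (@HJI A B j Hj X Y p Hp). Qed.

Lemma cof_of_J_I {A B : C} (i : Hom A B) : cof_of J A B i -> cof_of I A B i.
Proof. intros Hi X Y p Hp. exact (Hi X Y p (fib_of_I_J Hp)). Qed.

Lemma factorizations {A X : C} (f : Hom A X) : wfs I -> wfs J ->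
  (exists M (i : Hom A M) (p : Hom M X),
     i >>> p = f /\ cof_of I A M i /\ acyclic_fib (cof_of I) (fib_of J) p) /\
  (exists M (i : Hom A M) (p : Hom M X),
     i >>> p = f /\ acyclic_cof (cof_of I) (fib_of J) i /\ fib_of J M X p).
Proof.
  intros HwfsI HwfsJ. split.
  - destruct (HwfsI _ _ f) as [M [i [p [Hf [Hi Hp]]]]].
    exists M, i, p. split; [exact Hf | split; [exact Hi | split]].
    + exact (fib_of_I_J Hp).
    + intros A' B' i' Hi' _ _. exact (Hi' _ _ p Hp).
  - destruct (HwfsJ _ _ f) as [M [i [p [Hf [Hi Hp]]]]].
    exists M, i, p. split; [exact Hf | split; [split | exact Hp]].
    + exact (cof_of_J_I Hi).
    + intros X' Y' p' Hp' _ _. exact (Hi _ _ p' Hp').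
Qed.

End GeneratedClasses.

Section Adjunction.
Variables (C : Category) (F G : Endofunctor C).
Variables (eta : forall X : C, Hom X (G (F X))) (eps : forall Y : C, Hom (F (G Y)) Y).
Hypothesis eta_nat : forall X X' (f : Hom X X'), f >>> eta X' = eta X >>> fmap G (fmap F f).
Hypothesis eps_nat : forall Y Y' (g : Hom Y Y'), fmap F (fmap G g) >>> eps Y' = eps Y >>> g.
Hypothesis triangle_F : forall X, fmap F (eta X) >>> eps (F X) = cid (F X).
Hypothesis triangle_G : forall Y, eta (G Y) >>> fmap G (eps Y) = cid (G Y).

Definition flat {W Y : C} (f : Hom (F W) Y) : Hom W (G Y) := eta W >>> fmap G f.
Definition sharp {W Y : C} (g : Hom W (G Y)) : Hom (F W) Y := fmap F g >>> eps Y.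

Lemma sharp_flat {W Y : C} (f : Hom (F W) Y) : sharp (flat f) = f.
Proof.
  unfold sharp, flat.
  rewrite fmap_comp, comp_assoc, eps_nat, <- comp_assoc, triangle_F, comp_id_l.
  reflexivity.
Qed.

Lemma flat_sharp {W Y : C} (g : Hom W (G Y)) : flat (sharp g) = g.
Proof.
  unfold sharp, flat.
  rewrite fmap_comp, <- comp_assoc, <- eta_nat, comp_assoc, triangle_G, comp_id_r.
  reflexivity.
Qed.

Lemma flat_natl {W W' Y : C} (k : Hom W' W) (f : Hom (F W) Y) :
  flat (fmap F k >>> f) = k >>> flat f.
Proof. unfold flat. rewrite fmap_comp, <- comp_assoc, <- eta_nat, comp_assoc. reflexivity. Qed.

Lemma flat_natr {W Y Y' : C} (f : Hom (F W) Y) (y : Hom Y Y') :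
  flat (f >>> y) = flat f >>> fmap G y.
Proof. unfold flat. rewrite fmap_comp, comp_assoc. reflexivity. Qed.

Lemma sharp_natl {W W' Y : C} (k : Hom W' W) (g : Hom W (G Y)) :
  sharp (k >>> g) = fmap F k >>> sharp g.
Proof. unfold sharp. rewrite fmap_comp, comp_assoc. reflexivity. Qed.

Lemma sharp_natr {W Y Y' : C} (g : Hom W (G Y)) (y : Hom Y Y') :
  sharp (g >>> fmap G y) = sharp g >>> y.
Proof. unfold sharp. rewrite fmap_comp, comp_assoc, eps_nat, comp_assoc. reflexivity. Qed.

Lemma sharp_inj {W Y : C} (g g' : Hom W (G Y)) : sharp g = sharp g' -> g = g'.
Proof. intros E. rewrite <- (flat_sharp g), <- (flat_sharp g'), E. reflexivity. Qed.

Lemma right_adjoint_terminal {T : C} : is_terminal T -> is_terminal (G T).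
Proof.
  intros HT W. destruct (HT (F W)) as [t _].
  exists (flat t). intros g. apply sharp_inj, (terminal_hom_eq HT).
Qed.

(* [G X] is the path object of [X]: a map [W -> G X] is a homotopy [F W -> X], and
   [ev e X] evaluates it at the end [e]. *)
Definition ev (e : forall X : C, Hom X (F X)) (X : C) : Hom (G X) X := e (G X) >>> eps X.

Section Endpoint.
Variable e : forall X : C, Hom X (F X).
Hypothesis He : nat_from_id F e.

Lemma ev_nat {X Y : C} (f : Hom X Y) : fmap G f >>> ev e Y = ev e X >>> f.
Proof.
  unfold ev. rewrite <- comp_assoc, He, comp_assoc, eps_nat, comp_assoc. reflexivity.
Qed.

Lemma e_sharp {W Y : C} (g : Hom W (G Y)) : e W >>> sharp g = g >>> ev e Y.
Proof. unfold sharp, ev. rewrite <- comp_assoc, <- He, comp_assoc. reflexivity. Qed.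

(* [i] lifts against the gap map [G X -> G Y ×_Y X] of [p] at the end [e]; the
   pullback is not chosen, its cones are spelled out. *)
Definition llp_end_gap {A B X Y : C} (i : Hom A B) (p : Hom X Y) : Prop :=
  forall (a : Hom A (G X)) (b : Hom B (G Y)) (x : Hom B X),
    a >>> fmap G p = i >>> b -> a >>> ev e X = i >>> x -> b >>> ev e Y = x >>> p ->
    exists h : Hom B (G X), i >>> h = a /\ h >>> fmap G p = b /\ h >>> ev e X = x.

Lemma end_map_has_impl (Pm Qm : forall X Y : C, Hom X Y -> Prop) {A B : C} (i : Hom A B) :
  (forall X Y (m : Hom X Y), Pm X Y m -> Qm X Y m) ->
  end_map_has F e i Pm -> end_map_has F e i Qm.
Proof. intros PQ Hi P p1 p2 HP m m1 m2. exact (PQ _ _ m (Hi P p1 p2 HP m m1 m2)). Qed.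

Lemma llp_end_gap_of_end_map {A B X Y : C} (i : Hom A B) (p : Hom X Y) :
  cocomplete C -> end_map_has F e i (fun _ _ m => llp m p) -> llp_end_gap i p.
Proof.
  intros Hcc Hend a b x E1 E2 E3.
  destruct (pushout_exists i (e A) Hcc) as [P [p1 [p2 HP]]].
  destruct (proj2 HP (F B) (e B) (fmap F i) (He _ _ i)) as [m [[m1 m2] _]].
  destruct (proj2 HP X x (sharp a)) as [t [[t1 t2] _]].
  { rewrite e_sharp. symmetry; exact E2. }
  destruct (Hend P p1 p2 HP m m1 m2 t (sharp b)) as [k [k1 k2]].
  { apply (pushout_ext HP).
    - rwa t1. rwa m1. rewrite e_sharp. symmetry; exact E3.
    - rwa t2. rwa m2. rewrite <- sharp_natr, E1, sharp_natl. reflexivity. }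
  exists (flat k). split; [|split].
  - rewrite <- flat_natl, <- m2, comp_assoc, k1, t2, flat_sharp. reflexivity.
  - rewrite <- flat_natr, k2, flat_sharp. reflexivity.
  - rewrite <- e_sharp, sharp_flat, <- m1, comp_assoc, k1, t1. reflexivity.
Qed.

Lemma end_gap_map_exists {X Y : C} (p : Hom X Y) : complete C ->
  exists Q (gap : Hom (G X) Q),
    forall A B (i : Hom A B), llp i gap <-> llp_end_gap i p.
Proof.
  intros Hc.
  destruct (pullback_exists (ev e Y) p Hc) as [Q [q1 [q2 HQ]]].
  destruct (proj2 HQ (G X) (fmap G p) (ev e X) (ev_nat p)) as [gap [[g1 g2] _]].
  exists Q, gap. intros A B i. split.
  - intros Hi a b x E1 E2 E3.
    destruct (proj2 HQ B b x E3) as [c [[c1 c2] _]].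
    destruct (Hi a c) as [h [h1 h2]].
    { apply (pullback_ext HQ).
      - rwa g1. rwa c1. exact E1.
      - rwa g2. rwa c2. exact E2. }
    exists h. split; [exact h1|split].
    + rewrite <- g1. rwa h2. exact c1.
    + rewrite <- g2. rwa h2. exact c2.
  - intros Hi a c E.
    destruct (Hi a (c >>> q1) (c >>> q2)) as [h [h1 [h2 h3]]].
    + rewrite <- g1, <- comp_assoc, E, comp_assoc. reflexivity.
    + rewrite <- g2, <- comp_assoc, E, comp_assoc. reflexivity.
    + rewrite comp_assoc, (proj1 HQ). reassoc. reflexivity.
    + exists h. split; [exact h1|]. apply (pullback_ext HQ).
      * rwa g1. exact h2.
      * rwa g2. exact h3.
Qed.

Lemma llp_end_gap_of_generators (K : MapClass C) {X Y : C} (p : Hom X Y) :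
  complete C -> cocomplete C ->
  (forall A B (i : Hom A B), K A B i -> end_map_has F e i (fun _ _ m => llp m p)) ->
  forall A B (i : Hom A B), cof_of K A B i -> llp_end_gap i p.
Proof.
  intros Hc Hcc HK A B i Hi.
  destruct (end_gap_map_exists p Hc) as [Q [gap Hgap]].
  apply Hgap, Hi. intros A' B' k Hk.
  apply Hgap, (llp_end_gap_of_end_map Hcc), HK, Hk.
Qed.

End Endpoint.

Variables (e0 e1 : forall X : C, Hom X (F X)).
Hypotheses (He0 : nat_from_id F e0) (He1 : nat_from_id F e1).

(* [i] lifts against the gap map [G X -> G Y ×_(Y × Y) (X × X)] of [p]. *)
Definition llp_boundary_gap {A B X Y : C} (i : Hom A B) (p : Hom X Y) : Prop :=
  forall (a : Hom A (G X)) (b : Hom B (G Y)) (x0 x1 : Hom B X),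
    a >>> fmap G p = i >>> b -> a >>> ev e0 X = i >>> x0 -> a >>> ev e1 X = i >>> x1 ->
    b >>> ev e0 Y = x0 >>> p -> b >>> ev e1 Y = x1 >>> p ->
    exists h : Hom B (G X), i >>> h = a /\ h >>> fmap G p = b /\
      h >>> ev e0 X = x0 /\ h >>> ev e1 X = x1.

Lemma boundary_map_has_impl (Pm Qm : forall X Y : C, Hom X Y -> Prop) {A B : C}
  (i : Hom A B) :
  (forall X Y (m : Hom X Y), Pm X Y m -> Qm X Y m) ->
  boundary_map_has F e0 e1 i Pm -> boundary_map_has F e0 e1 i Qm.
Proof.
  intros PQ Hi SA a1 a2 HSA SB b1 b2 HSB u u1 u2 v v1 v2 P p1 p2 HP m m1 m2 m3.
  exact (PQ _ _ m (Hi SA a1 a2 HSA SB b1 b2 HSB u u1 u2 v v1 v2 P p1 p2 HP m m1 m2 m3)).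
Qed.

Lemma llp_boundary_gap_of_boundary_map {A B X Y : C} (i : Hom A B) (p : Hom X Y) :
  cocomplete C -> boundary_map_has F e0 e1 i (fun _ _ m => llp m p) ->
  llp_boundary_gap i p.
Proof.
  intros Hcc Hbd a b x0 x1 E1 E2 E3 E4 E5.
  destruct (coproduct_exists A A Hcc) as [SA [a1 [a2 HSA]]].
  destruct (coproduct_exists B B Hcc) as [SB [b1 [b2 HSB]]].
  destruct (HSA SB (i >>> b1) (i >>> b2)) as [u [[u1 u2] _]].
  destruct (HSA (F A) (e0 A) (e1 A)) as [v [[v1 v2] _]].
  destruct (pushout_exists u v Hcc) as [P [p1 [p2 HP]]].
  destruct (HSB (F B) (e0 B) (e1 B)) as [mB [[mB1 mB2] _]].
  destruct (proj2 HP (F B) mB (fmap F i)) as [m [[m1 m2] _]].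
  { apply (coproduct_ext HSA).
    - rwa u1. rwa mB1. rwa v1. apply He0.
    - rwa u2. rwa mB2. rwa v2. apply He1. }
  destruct (HSB X x0 x1) as [xB [[xB1 xB2] _]].
  destruct (proj2 HP X xB (sharp a)) as [t [[t1 t2] _]].
  { apply (coproduct_ext HSA).
    - rwa u1. rwa xB1. rwa v1. rewrite (e_sharp He0). symmetry; exact E2.
    - rwa u2. rwa xB2. rwa v2. rewrite (e_sharp He1). symmetry; exact E3. }
  assert (Hm1 : b1 >>> (p1 >>> m) = e0 B) by (rwa m1; exact mB1).
  assert (Hm2 : b2 >>> (p1 >>> m) = e1 B) by (rwa m1; exact mB2).
  destruct (Hbd SA a1 a2 HSA SB b1 b2 HSB u u1 u2 v v1 v2 P p1 p2 HP m Hm1 Hm2 m2 t (sharp b))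
    as [k [k1 k2]].
  { apply (pushout_ext HP).
    - rwa t1. rwa m1. apply (coproduct_ext HSB).
      + rwa xB1. rwa mB1. rewrite (e_sharp He0). symmetry; exact E4.
      + rwa xB2. rwa mB2. rewrite (e_sharp He1). symmetry; exact E5.
    - rwa t2. rwa m2. rewrite <- sharp_natr, E1, sharp_natl. reflexivity. }
  exists (flat k). split; [|split; [|split]].
  - rewrite <- flat_natl, <- m2, comp_assoc, k1, t2, flat_sharp. reflexivity.
  - rewrite <- flat_natr, k2, flat_sharp. reflexivity.
  - rewrite <- (e_sharp He0), sharp_flat, <- Hm1. rwa k1. rwa t1. exact xB1.
  - rewrite <- (e_sharp He1), sharp_flat, <- Hm2. rwa k1. rwa t1. exact xB2.
Qed.

Section BoundaryGapMap.
Variables (X Y : C) (p : Hom X Y).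
Variables (Q1 : C) (q1 : Hom Q1 (G Y)) (q2 : Hom Q1 X).
Hypothesis HQ1 : is_pullback (ev e0 Y) p q1 q2.
Variables (Q2 : C) (r1 : Hom Q2 Q1) (r2 : Hom Q2 X).
Hypothesis HQ2 : is_pullback (q1 >>> ev e1 Y) p r1 r2.
Variable gap : Hom (G X) Q2.
Hypothesis gap_q1 : gap >>> (r1 >>> q1) = fmap G p.
Hypothesis gap_q2 : gap >>> (r1 >>> q2) = ev e0 X.
Hypothesis gap_r2 : gap >>> r2 = ev e1 X.

Lemma llp_gap_of_llp_boundary_gap {A B : C} (i : Hom A B) :
  llp_boundary_gap i p -> llp i gap.
Proof.
  intros Hi a c E.
  destruct (Hi a (c >>> (r1 >>> q1)) (c >>> (r1 >>> q2)) (c >>> r2)) as [h [h1 [h2 [h3 h4]]]].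
  - rewrite <- gap_q1, <- comp_assoc, E. reassoc. reflexivity.
  - rewrite <- gap_q2, <- comp_assoc, E. reassoc. reflexivity.
  - rewrite <- gap_r2, <- comp_assoc, E, comp_assoc. reflexivity.
  - rwa (proj1 HQ1). reflexivity.
  - rwa (proj1 HQ2). reflexivity.
  - exists h. split; [exact h1|]. apply (pullback_ext HQ2).
    + apply (pullback_ext HQ1).
      * rwa gap_q1. exact h2.
      * rwa gap_q2. exact h3.
    + rwa gap_r2. exact h4.
Qed.

Lemma llp_boundary_gap_of_llp_gap {A B : C} (i : Hom A B) :
  llp i gap -> llp_boundary_gap i p.
Proof.
  intros Hi a b x0 x1 E1 E2 E3 E4 E5.
  destruct (proj2 HQ1 B b x0 E4) as [c [[c1 c2] _]].
  destruct (proj2 HQ2 B c x1) as [d [[d1 d2] _]]. { rwa c1. exact E5. }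
  destruct (Hi a d) as [h [h1 h2]].
  { apply (pullback_ext HQ2); [apply (pullback_ext HQ1)|].
    - rwa gap_q1. rwa d1. rwa c1. exact E1.
    - rwa gap_q2. rwa d1. rwa c2. exact E2.
    - rwa gap_r2. rwa d2. exact E3. }
  exists h. split; [exact h1|split; [|split]].
  - rewrite <- gap_q1. rwa h2. rwa d1. exact c1.
  - rewrite <- gap_q2. rwa h2. rwa d1. exact c2.
  - rewrite <- gap_r2. rwa h2. exact d2.
Qed.

End BoundaryGapMap.

Lemma boundary_gap_map_exists {X Y : C} (p : Hom X Y) : complete C ->
  exists Q (gap : Hom (G X) Q),
    forall A B (i : Hom A B), llp i gap <-> llp_boundary_gap i p.
Proof.
  intros Hc.
  destruct (pullback_exists (ev e0 Y) p Hc) as [Q1 [q1 [q2 HQ1]]].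
  destruct (pullback_exists (q1 >>> ev e1 Y) p Hc) as [Q2 [r1 [r2 HQ2]]].
  destruct (proj2 HQ1 (G X) (fmap G p) (ev e0 X) (ev_nat He0 p)) as [g [[g1 g2] _]].
  destruct (proj2 HQ2 (G X) g (ev e1 X)) as [gap [[gap_r1 gap_r2] _]].
  { rwa g1. apply (ev_nat He1). }
  assert (gap_q1 : gap >>> (r1 >>> q1) = fmap G p) by (rwa gap_r1; exact g1).
  assert (gap_q2 : gap >>> (r1 >>> q2) = ev e0 X) by (rwa gap_r1; exact g2).
  exists Q2, gap. intros A B i. split.
  - apply (llp_boundary_gap_of_llp_gap HQ1 HQ2 gap_q1 gap_q2 gap_r2).
  - apply (llp_gap_of_llp_boundary_gap HQ1 HQ2 gap gap_q1 gap_q2 gap_r2).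
Qed.

Lemma llp_boundary_gap_of_generators (K : MapClass C) {X Y : C} (p : Hom X Y) :
  complete C -> cocomplete C ->
  (forall A B (i : Hom A B), K A B i -> boundary_map_has F e0 e1 i (fun _ _ m => llp m p)) ->
  forall A B (i : Hom A B), cof_of K A B i -> llp_boundary_gap i p.
Proof.
  intros Hc Hcc HK A B i Hi.
  destruct (boundary_gap_map_exists p Hc) as [Q [gap Hgap]].
  apply Hgap, Hi. intros A' B' k Hk.
  apply Hgap, (llp_boundary_gap_of_boundary_map Hcc), HK, Hk.
Qed.

(* [H] is a homotopy, relative to [B], from the identity of [Z] to a map factoring
   through [j]. *)
Lemma retraction_homotopy {B Z : C} {j : Hom B Z} {r : Hom Z B} (jr : j >>> r = cid B)
  {s : Hom B (G B)} (s0 : s >>> ev e0 B = cid B) :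
  llp_boundary_gap j r ->
  exists H : Hom Z (G Z), j >>> H = s >>> fmap G j /\ H >>> fmap G r = r >>> s /\
    H >>> ev e0 Z = cid Z /\ H >>> ev e1 Z = r >>> (s >>> (ev e1 B >>> j)).
Proof.
  intros Hj.
  destruct (Hj (s >>> fmap G j) (r >>> s) (cid Z) (r >>> (s >>> (ev e1 B >>> j))))
    as [H [H1 [H2 [H3 H4]]]].
  - rewrite comp_assoc, <- fmap_comp, jr, fmap_id, comp_id_r. rwa jr.
    rewrite comp_id_l. reflexivity.
  - rewrite comp_id_r, comp_assoc, (ev_nat He0). rwa s0. apply comp_id_l.
  - rewrite comp_assoc, (ev_nat He1). rwa jr. rewrite comp_id_l. reflexivity.
  - rewrite comp_id_l. rwa s0. apply comp_id_r.
  - reassoc. rwa jr. rewrite comp_id_r. reflexivity.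
  - exists H. auto.
Qed.

Variables (I J : MapClass C).
Hypotheses (Hcomplete : complete C) (Hcocomplete : cocomplete C).
Hypothesis H3 : forall A B (i : Hom A B), I A B i -> boundary_map_has F e0 e1 i (cof_of I).
Hypothesis H4_0 : forall A B (i : Hom A B), I A B i -> end_map_has F e0 i (llp_Jfib_fibrant J).
Hypothesis H4_1 : forall A B (i : Hom A B), I A B i -> end_map_has F e1 i (llp_Jfib_fibrant J).
Hypothesis H5 : forall A B (j : Hom A B), J A B j ->
  boundary_map_has F e0 e1 j (llp_Jfib_fibrant J).

Local Notation J_fibrant := (fibrant_wrt (fib_of J)).
Local Notation I_cofibrant := (cofibrant_wrt (cof_of I)).

Lemma llp_boundary_gap_Ifib {X Y : C} (r : Hom X Y) : fib_of I X Y r ->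
  forall A B (i : Hom A B), cof_of I A B i -> llp_boundary_gap i r.
Proof.
  intros Hr. apply (llp_boundary_gap_of_generators Hcomplete Hcocomplete).
  intros A B i Hi. eapply boundary_map_has_impl; [|exact (H3 Hi)].
  intros P Q m Hm. exact (Hm _ _ r Hr).
Qed.

Lemma llp_boundary_gap_Jfib {X Y : C} (p : Hom X Y) :
  fib_of J X Y p -> J_fibrant X -> J_fibrant Y ->
  forall A B (i : Hom A B), cof_of J A B i -> llp_boundary_gap i p.
Proof.
  intros Hp HX HY. apply (llp_boundary_gap_of_generators Hcomplete Hcocomplete).
  intros A B i Hi. eapply boundary_map_has_impl; [|exact (H5 Hi)].
  intros P Q m Hm. exact (Hm _ _ p Hp HX HY).
Qed.

Lemma llp_end_gap_Jfib (e : forall X : C, Hom X (F X)) (He : nat_from_id F e) :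
  (forall A B (i : Hom A B), I A B i -> end_map_has F e i (llp_Jfib_fibrant J)) ->
  forall X Y (p : Hom X Y), fib_of J X Y p -> J_fibrant X -> J_fibrant Y ->
  forall A B (i : Hom A B), cof_of I A B i -> llp_end_gap e i p.
Proof.
  intros H4 X Y p Hp HX HY. apply (llp_end_gap_of_generators He Hcomplete Hcocomplete).
  intros A B i Hi. eapply end_map_has_impl; [|exact (H4 _ _ i Hi)].
  intros P Q m Hm. exact (Hm _ _ p Hp HX HY).
Qed.

Lemma ev0_rlp_cof {X : C} : J_fibrant X ->
  forall A B (i : Hom A B), cof_of I A B i -> llp i (ev e0 X).
Proof.
  intros HX A B i Hi a x E.
  destruct (terminal_exists Hcomplete) as [T HT].
  destruct (HT X) as [t _].
  destruct (right_adjoint_terminal HT B) as [b _].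
  destruct (llp_end_gap_Jfib He0 H4_0 (HX T HT t) HX (fibrant_terminal J HT) Hi a b x)
    as [h [h1 [_ h3]]].
  - apply (terminal_hom_eq (right_adjoint_terminal HT)).
  - exact E.
  - apply (terminal_hom_eq HT).
  - exists h. split; assumption.
Qed.

Lemma ev0_section {B : C} : J_fibrant B -> I_cofibrant B ->
  exists s : Hom B (G B), s >>> ev e0 B = cid B.
Proof.
  intros HB HBc.
  destruct (initial_exists Hcocomplete) as [O HO].
  destruct (HO B) as [o _]. destruct (HO (G B)) as [a _].
  destruct (ev0_rlp_cof HB (HBc O HO o) a (cid B)) as [s [_ s0]].
  - apply (initial_hom_eq HO).
  - exists s. exact s0.
Qed.

Lemma llp_Jfib_fibrant_of_retraction {B Z : C} (j : Hom B Z) (r : Hom Z B) :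
  cof_of I B Z j -> fib_of I Z B r -> j >>> r = cid B -> I_cofibrant B -> J_fibrant B ->
  llp_Jfib_fibrant J B Z j.
Proof.
  intros Hj Hr jr HBc HB X Y p Hp HX HY u v E.
  destruct (ev0_section HB HBc) as [s s0].
  destruct (retraction_homotopy jr s0 (llp_boundary_gap_Ifib Hr Hj))
    as [H [H_j [H_r [H_ev0 H_ev1]]]].
  destruct (llp_end_gap_Jfib He1 H4_1 Hp HX HY Hj (s >>> fmap G u) (H >>> fmap G v)
              (r >>> (s >>> (ev e1 B >>> u)))) as [k [k1 [k2 k3]]].
  - rewrite comp_assoc, <- fmap_comp, E, fmap_comp. rwa H_j. reflexivity.
  - rewrite comp_assoc, (ev_nat He1). rwa jr. rewrite comp_id_l. reflexivity.
  - rewrite comp_assoc, (ev_nat He1). rwa H_ev1. rewrite E. reflexivity.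
  - exists (k >>> ev e0 X). split.
    + rwa k1. rewrite (ev_nat He0). rwa s0. apply comp_id_l.
    + rewrite comp_assoc, <- (ev_nat He0). rwa k2. rewrite (ev_nat He0). rwa H_ev0.
      apply comp_id_l.
Qed.

Lemma rlp_cof_of_section {E Y : C} (f : Hom E Y) (s : Hom Y E) :
  fib_of J E Y f -> cof_of J Y E s -> s >>> f = cid Y ->
  I_cofibrant Y -> J_fibrant Y -> J_fibrant E ->
  forall A B (i : Hom A B), cof_of I A B i -> llp i f.
Proof.
  intros Hf Hs sf HYc HY HE A B i Hi u v E'.
  destruct (ev0_section HY HYc) as [t t0].
  destruct (retraction_homotopy sf t0 (llp_boundary_gap_Jfib Hf HE HY Hs))
    as [H [H_j [H_r [H_ev0 H_ev1]]]].
  destruct (llp_end_gap_Jfib He1 H4_1 Hf HE HY Hi (u >>> H) (v >>> t)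
              (v >>> (t >>> (ev e1 Y >>> s)))) as [k [k1 [k2 k3]]].
  - rwa H_r. rwa E'. reflexivity.
  - rwa H_ev1. rwa E'. reflexivity.
  - rwa sf. rewrite comp_id_r. reflexivity.
  - exists (k >>> ev e0 E). split.
    + rwa k1. rwa H_ev0. apply comp_id_r.
    + rewrite comp_assoc, <- (ev_nat He0). rwa k2. rwa t0. apply comp_id_r.
Qed.

Lemma relative_cylinder : wfs I ->
  forall A B (i : Hom A B), cof_of I A B i -> I_cofibrant A -> J_fibrant B ->
  forall P (in1 in2 : Hom B P), is_pushout i i in1 in2 ->
  exists Cy (c : Hom P Cy) (q : Hom Cy B),
    in1 >>> (c >>> q) = cid B /\ in2 >>> (c >>> q) = cid B /\
    cof_of I P Cy c /\ acyclic_cof (cof_of I) (fib_of J) (in1 >>> c).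
Proof.
  intros HwfsI A B i Hi HA HB P in1 in2 HP.
  destruct (proj2 HP B (cid B) (cid B) eq_refl) as [nab [[n1 n2] _]].
  destruct (HwfsI _ _ nab) as [Cy [c [q [cq [Hc Hq]]]]].
  assert (Hin1 : cof_of I B P in1) by exact (cof_of_pushout (pushout_sym HP) Hi).
  exists Cy, c, q. rewrite cq.
  split; [exact n1 | split; [exact n2 | split; [exact Hc | split]]].
  - exact (cof_of_comp Hin1 Hc).
  - apply (llp_Jfib_fibrant_of_retraction (cof_of_comp Hin1 Hc) Hq).
    + rewrite comp_assoc, cq. exact n1.
    + exact (cofibrant_of_cof Hi HA).
    + exact HB.
Qed.

Lemma relative_path_object : wfs J ->
  forall X Y (p : Hom Y X), fib_of J Y X p -> I_cofibrant Y -> J_fibrant X ->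
  forall Q (pr1 pr2 : Hom Q Y), is_pullback p p pr1 pr2 ->
  exists Pt (s : Hom Y Pt) (q : Hom Pt Q),
    (s >>> q) >>> pr1 = cid Y /\ (s >>> q) >>> pr2 = cid Y /\
    fib_of J Pt Q q /\ acyclic_fib (cof_of I) (fib_of J) (q >>> pr1).
Proof.
  intros HwfsJ X Y p Hp HY HX Q pr1 pr2 HQ.
  destruct (proj2 HQ Y (cid Y) (cid Y) eq_refl) as [diag [[d1 d2] _]].
  destruct (HwfsJ _ _ diag) as [Pt [s [q [sq [Hs Hq]]]]].
  assert (Hpr1 : fib_of J Q Y pr1) by exact (fib_of_pullback (pullback_sym HQ) Hp).
  assert (HYf : J_fibrant Y) by exact (fibrant_of_fib Hp HX).
  assert (Hf : fib_of J Pt Y (q >>> pr1)) by exact (fib_of_comp Hq Hpr1).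
  exists Pt, s, q. rewrite sq.
  split; [exact d1 | split; [exact d2 | split; [exact Hq | split; [exact Hf|]]]].
  intros A B i Hi _ _. apply (rlp_cof_of_section Hf Hs); try assumption.
  - rewrite <- comp_assoc, sq. exact d1.
  - exact (fibrant_of_fib Hf HYf).
Qed.

End Adjunction.

Unset Implicit Arguments.

Theorem theorem3p5 (C : Category) (I J : MapClass C)
  (Hcomplete : complete C) (Hcocomplete : cocomplete C)
  (* (1) *)
  (HwfsI : wfs I) (HwfsJ : wfs J)
  (HJI : forall A B (j : Hom A B), J A B j -> cof_of I A B j)
  (* (2) *)
  (Cyl : Endofunctor C) (HCadj : is_left_adjoint Cyl)
  (e0 e1 : forall X : C, Hom X (Cyl X))
  (He0 : nat_from_id Cyl e0) (He1 : nat_from_id Cyl e1)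
  (* (3) *)
  (H3 : forall A B (i : Hom A B), I A B i ->
          boundary_map_has Cyl e0 e1 i (cof_of I))
  (* (4) *)
  (H4_0 : forall A B (i : Hom A B), I A B i -> end_map_has Cyl e0 i (llp_Jfib_fibrant J))
  (H4_1 : forall A B (i : Hom A B), I A B i -> end_map_has Cyl e1 i (llp_Jfib_fibrant J))
  (* (5) *)
  (H5 : forall A B (j : Hom A B), J A B j ->
          boundary_map_has Cyl e0 e1 j (llp_Jfib_fibrant J)) :
  exists Cof Fib : MapClass C,
    is_weak_model_structure Cof Fib /\
    (forall X Y (p : Hom X Y),
        (Fib X Y p /\ fibrant Fib X /\ fibrant Fib Y) <->
        (fib_of J X Y p /\ fibrant_wrt (fib_of J) X /\ fibrant_wrt (fib_of J) Y)) /\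
    (forall A B (i : Hom A B),
        (Cof A B i /\ cofibrant Cof A /\ cofibrant Cof B) <->
        (cof_of I A B i /\ cofibrant_wrt (cof_of I) A /\ cofibrant_wrt (cof_of I) B)).
Proof.
  destruct HCadj as (G & eta & eps & Heta & Heps & HtriF & HtriG).
  exists (cof_of I), (fib_of J). split; [|split].
  - split; [exact (cof_of_class_axioms I Hcocomplete)|].
    split; [exact (fib_of_class_axioms J Hcomplete)|].
    split; [intros A X f _ _; exact (factorizations HJI f HwfsI HwfsJ)|].
    split.
    + exact (relative_cylinder G eta eps Heta Heps HtriF HtriG He0 He1
               Hcomplete Hcocomplete H3 H4_0 H4_1 HwfsI).
    + exact (relative_path_object G eta eps Heta Heps HtriF HtriG He0 He1
               Hcomplete Hcocomplete H4_0 H4_1 H5 HwfsJ).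
  - intros X Y p. unfold fibrant. tauto.
  - intros A B i. unfold cofibrant. tauto.
Qed.
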